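(* (i) For each $n$, $$\mathrm{Var}[\widetilde H_n]\ \ge\ \sum_{j=1}^{\lfloor 2h_n\rfloor} r_{j,n}(1-p_{j,n})\ \ge\ \sum_{j=1}^{\lfloor 2h_n\rfloor}\widetilde r_{j,n}(1-p_{j,n}),$$ where $\widetilde r_{j,n}=p_{j,n}+2\sum_{l=j+1}^{\lfloor 2h_n\rfloor}p_{l,n}$. (ii) If $\liminf_n \mathrm{Var}[\widetilde H_n]>0$, then as $n\to\infty$ $$\mathrm{Var}[\widetilde H_n]\sim \sum_{j=1}^{\lfloor 2h_n\rfloor}\widetilde r_{j,n}(1-p_{j,n}),$$ and, with $$V_n=\sum_{j=1}^{\lfloor 3\widehat H_n\rfloor}p_{j,n}(1-p_{j,n})+2\sum_{l=2}^{\lfloor 3\widehat H_n\rfloor}p_{l,n}\sum_{j=1}^{l-1}(1-p_{j,n}),$$ we have $V_n/\mathrm{Var}[\widetilde H_n]\to 1$ in probability.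
   Context: $X$ is a positive random variable with survival function $S(x)=P(X>x)$ satisfying $S(x)>0$ for all $x\ge0$. Write $S_-(x)=P(X\ge x)$. For each integer $n\ge1$, the theoretical $h$-index is $$h_n=\sup\{x\ge 0:\ nS_-(x)\ge x\}.$$ Let $X_1,\dots,X_n$ be independent copies of $X$, and write $$\widehat S_n(x)=\frac1n\sum_{i=1}^n\mathbf 1\{X_i>x\},\qquad \widehat S_{n-}(x)=\frac1n\sum_{i=1}^n\mathbf 1\{X_i\ge x\}.$$ The empirical $h$-index is $$\widehat H_n=\sup\{x\ge0:\ n\widehat S_{n-}(x)\ge x\},$$ and $$\widetilde H_n=\sum_{j=1}^n\mathbf 1\{\widehat S_n(j-1)\ge j/n\}.$$ For $1\le j\le n$, $$p_{j,n}=P\bigl(n\widehat S_n(j-1)\ge j\bigr)=\sum_{y=j}^n\binom ny S(j-1)^y\bigl(1-S(j-1)\bigr)^{n-y},$$ and $p_{j,n}=0$ for $j>n$. Finally, $$r_{j,n}=p_{j,n}+2\sum_{l=j+1}^n p_{l,n}.$$ The notation $a_n\sim b_n$ means $a_n/b_n\to1$. *)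

From Stdlib Require Import Reals Lra Lia Arith.
Open Scope R_scope.

Fixpoint sum1 (f : nat -> R) (m : nat) : R :=
  match m with O => 0 | S k => sum1 f k + f (S k) end.

(* sum_{l=a}^{b} f l  (for a >= 1; empty if a > b) *)
Definition sum_range (a b : nat) (f : nat -> R) : R :=
  sum1 (fun k => if Nat.leb a k then f k else 0) b.

Fixpoint prod_lt (f : nat -> R) (n : nat) : R :=
  match n with O => 1 | S k => prod_lt f k * f k end.

Fixpoint sum_lt (f : nat -> R) (n : nat) : R :=
  match n with O => 0 | S k => sum_lt f k + f k end.

(* floor of a real, as a natural number (negative values sent to 0) *)
Definition floorn (x : R) : nat := Z.to_nat (Int_part x).

Inductive borel : (R -> Prop) -> Prop :=
| borel_half (a : R) : borel (fun x => a < x)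
| borel_compl (B : R -> Prop) : borel B -> borel (fun x => ~ B x)
| borel_union (Bs : nat -> R -> Prop) :
    (forall k, borel (Bs k)) -> borel (fun x => exists k, Bs k x).

Definition prob_space (Omega : Type) (ev : (Omega -> Prop) -> Prop)
  (P : (Omega -> Prop) -> R) : Prop :=
  ev (fun _ => True) /\
  (forall A, ev A -> ev (fun w => ~ A w)) /\
  (forall A : nat -> Omega -> Prop, (forall k, ev (A k)) ->
      ev (fun w => exists k, A k w)) /\
  (forall A, ev A -> 0 <= P A) /\
  P (fun _ => True) = 1 /\
  (forall A : nat -> Omega -> Prop, (forall k, ev (A k)) ->
     (forall k l w, k <> l -> A k w -> A l w -> False) ->
     Un_cv (fun N => sum_f_R0 (fun k => P (A k)) N)
           (P (fun w => exists k, A k w))).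

Definition iid_seq (Omega : Type) (ev : (Omega -> Prop) -> Prop)
  (P : (Omega -> Prop) -> R) (X : nat -> Omega -> R) : Prop :=
  (forall i B, borel B -> ev (fun w => B (X i w))) /\
  (forall i B, borel B -> P (fun w => B (X i w)) = P (fun w => B (X 0%nat w))) /\
  (forall (n : nat) (B : nat -> R -> Prop), (forall i, borel (B i)) ->
     P (fun w => forall i, (i < n)%nat -> B i (X i w))
     = prod_lt (fun i => P (fun w => B i (X i w))) n).

Section Hindex.
Variables (Omega : Type) (P : (Omega -> Prop) -> R) (X : nat -> Omega -> R).

Definition Ssurv (x : R) : R := P (fun w => X 0%nat w > x).
Definition Sminus (x : R) : R := P (fun w => X 0%nat w >= x).

(* the set whose supremum is the theoretical h-index h_n *)
Definition hset (n : nat) (x : R) : Prop := 0 <= x /\ INR n * Sminus x >= x.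

(* empirical survival functions based on X_1..X_n (here X_0..X_{n-1}) *)
Definition Shat (n : nat) (w : Omega) (x : R) : R :=
  / INR n * sum_lt (fun i => if Rlt_dec x (X i w) then 1 else 0) n.
Definition Shatm (n : nat) (w : Omega) (x : R) : R :=
  / INR n * sum_lt (fun i => if Rle_dec x (X i w) then 1 else 0) n.

(* the set whose supremum is the empirical h-index \hat H_n(w) *)
Definition Hhatset (n : nat) (w : Omega) (x : R) : Prop :=
  0 <= x /\ INR n * Shatm n w x >= x.

Definition Htilde (n : nat) (w : Omega) : R :=
  sum1 (fun j => if Rle_dec (INR j / INR n) (Shat n w (INR j - 1)) then 1 else 0) n.

(* Variance of the simple (values in {0,...,n}) random variable \tilde H_n *)
Definition VarHtilde (n : nat) : R :=
  sum_f_R0 (fun k => INR k ^ 2 * P (fun w => Htilde n w = INR k)) n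
  - (sum_f_R0 (fun k => INR k * P (fun w => Htilde n w = INR k)) n) ^ 2.

Definition pjn (j n : nat) : R :=
  if Nat.leb j n then
    sum_range j n (fun y => C n y * Ssurv (INR j - 1) ^ y
                            * (1 - Ssurv (INR j - 1)) ^ (n - y))
  else 0.

Definition rjn (j n : nat) : R := pjn j n + 2 * sum_range (S j) n (fun l => pjn l n).

(* \tilde r_{j,n} with upper summation bound K = floor(2 h_n) *)
Definition rtjn (K j n : nat) : R := pjn j n + 2 * sum_range (S j) K (fun l => pjn l n).

(* V_n with M = floor(3 \hat H_n) *)
Definition Vn (M n : nat) : R :=
  sum1 (fun j => pjn j n * (1 - pjn j n)) M
  + 2 * sum_range 2 M (fun l => pjn l n * sum1 (fun j => 1 - pjn j n) (l - 1)).

End Hindex.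

Arguments Ssurv {Omega}. Arguments Sminus {Omega}. Arguments hset {Omega}.
Arguments Shat {Omega}. Arguments Shatm {Omega}. Arguments Hhatset {Omega}.
Arguments Htilde {Omega}. Arguments VarHtilde {Omega}. Arguments pjn {Omega}.
Arguments rjn {Omega}. Arguments rtjn {Omega}. Arguments Vn {Omega}.

From Stdlib Require Import Reals Lra Lia ZArith FunctionalExtensionality PropExtensionality Classical.
Open Scope R_scope.

(* The events [{n Shat_n(j - 1) >= j}] have probabilities [p_{j,n}] and decrease in [j], so
   [Htilde_n] is the last [j] for which the event occurs and [P(Htilde_n = k) = p_k - p_{k+1}].
   Summation by parts turns the variance into the quadratic form
   [vsum p M = sum_j p_j (1 - p_j) + 2 sum_l p_l sum_{j<l} (1 - p_j)] at [M = n]; its value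
   increases with [M], which gives (i), and [V_n] is its value at [M = floor(3 Hhat_n)].
   For [l > 2 h_n] a Chernoff bound gives [p_{l,n} <= (sqrt e / 2)^l], so the part of the
   variance beyond [floor(2 h_n)] is [o(1)] as [h_n -> oo]; a variance bounded away from 0
   gives the first limit. Finally [3 Hhat_n >= 2 h_n] unless at most [2 h_n / 3] observations
   reach [2 h_n / 3], which has probability at most [(2 e^(-3/4))^floor(2 h_n / 3) -> 0], and
   otherwise [V_n] lies between [vsum p (floor(2 h_n))] and the variance. *)

Lemma pred_ext {T : Type} (A B : T -> Prop) : (forall w, A w <-> B w) -> A = B.
Proof. intros H; extensionality w; apply propositional_extensionality; auto. Qed.

Lemma Rle_of_forall_sub_inv z x : (forall k : nat, z - / (INR k + 1) <= x) -> z <= x.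
Proof.
  intros H. destruct (Rle_dec z x) as [|Hlt]; auto. exfalso.
  destruct (INR_archimed (z - x) 1) as [k Hk]; [lra|].
  pose proof (pos_INR k). specialize (H k).
  assert (Hinv : / (INR k + 1) * (INR k + 1) = 1) by (field; lra).
  assert ((z - x) * (INR k + 1) <= / (INR k + 1) * (INR k + 1))
    by (apply Rmult_le_compat_r; lra).
  nra.
Qed.

Lemma inv_INR_succ_pos k : 0 < / (INR k + 1).
Proof. apply Rinv_0_lt_compat; pose proof (pos_INR k); lra. Qed.

Lemma is_lub_exists_gt (E : R -> Prop) m x : is_lub E m -> x < m -> exists y, E y /\ x < y.
Proof.
  intros [_ Hleast] Hx. apply NNPP; intros Hno.
  assert (m <= x); [|lra].
  apply Hleast; intros y Hy. apply Rnot_lt_le; intros Hxy. apply Hno; eauto.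
Qed.

Lemma exp_INR_mul x l : exp (INR l * x) = exp x ^ l.
Proof. rewrite <- Rpower_pow by apply exp_pos. unfold Rpower. rewrite ln_exp. reflexivity. Qed.

Lemma exp_le x y : x <= y -> exp x <= exp y.
Proof. intros [H|H]; [left; apply exp_increasing; auto | subst; lra]. Qed.

Lemma floorn_spec x : 0 <= x -> INR (floorn x) <= x /\ x - 1 < INR (floorn x).
Proof.
  intros Hx. unfold floorn. destruct (base_Int_part x) as [H1 H2].
  assert (Hz : (0 <= Int_part x)%Z) by (assert (-1 < Int_part x)%Z by (apply lt_IZR; simpl; lra); lia).
  rewrite INR_IZR_INZ, Z2Nat.id by auto. lra.
Qed.

Lemma floorn_char x m : 0 <= x -> (floorn x = m <-> INR m <= x < INR m + 1).
Proof.
  intros Hx. destruct (floorn_spec x Hx) as [H1 H2]. split.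
  - intros E; subst; lra.
  - intros [H3 H4]. destruct (Nat.lt_total (floorn x) m) as [L|[E|L]]; auto;
      apply le_INR in L; rewrite S_INR in L; lra.
Qed.

Lemma floorn_mono x y : 0 <= x <= y -> (floorn x <= floorn y)%nat.
Proof.
  intros H. destruct (floorn_spec x ltac:(lra)), (floorn_spec y ltac:(lra)).
  destruct (le_lt_dec (floorn x) (floorn y)) as [|L]; auto.
  apply le_INR in L. rewrite S_INR in L. lra.
Qed.

Lemma sum1_ext f g M : (forall j, (1 <= j <= M)%nat -> f j = g j) -> sum1 f M = sum1 g M.
Proof.
  induction M; intros H; simpl; auto.
  rewrite IHM by (intros; apply H; lia). rewrite H by lia. reflexivity.
Qed.

Lemma sum1_plus f g M : sum1 (fun j => f j + g j) M = sum1 f M + sum1 g M.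
Proof. induction M; simpl; [ring | rewrite IHM; ring]. Qed.

Lemma sum1_minus f g M : sum1 (fun j => f j - g j) M = sum1 f M - sum1 g M.
Proof. induction M; simpl; [ring | rewrite IHM; ring]. Qed.

Lemma sum1_scal c f M : sum1 (fun j => c * f j) M = c * sum1 f M.
Proof. induction M; simpl; [ring | rewrite IHM; ring]. Qed.

Lemma sum1_const c M : sum1 (fun _ => c) M = INR M * c.
Proof. induction M; simpl sum1; [simpl; ring | rewrite IHM, S_INR; ring]. Qed.

Lemma sum1_le f g M : (forall j, (1 <= j <= M)%nat -> f j <= g j) -> sum1 f M <= sum1 g M.
Proof.
  induction M; intros H; simpl; [lra|].
  assert (f (S M) <= g (S M)) by (apply H; lia).
  assert (sum1 f M <= sum1 g M) by (apply IHM; intros; apply H; lia). lra.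
Qed.

Lemma sum1_nonneg f M : (forall j, (1 <= j <= M)%nat -> 0 <= f j) -> 0 <= sum1 f M.
Proof. intros H. rewrite <- (Rmult_0_r (INR M)), <- sum1_const. apply sum1_le; auto. Qed.

Lemma sum1_le_support f n K : (forall j, (1 <= j)%nat -> 0 <= f j) ->
  (forall j, (n < j)%nat -> f j = 0) -> sum1 f K <= sum1 f n.
Proof.
  intros Hf Hz. destruct (le_lt_dec K n) as [Hle|Hlt].
  - clear Hz. induction Hle as [|m Hm IH]; [lra|]. simpl. specialize (Hf (S m) ltac:(lia)). lra.
  - induction Hlt as [|m Hm IH]; simpl; rewrite Hz by lia; lra.
Qed.

Lemma sum_f_R0_sum1 f n : sum_f_R0 f n = f O + sum1 f n.
Proof. induction n; simpl; [ring | rewrite IHn; ring]. Qed.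

Lemma sum_range_empty a b f : (b < a)%nat -> sum_range a b f = 0.
Proof.
  intros H. unfold sum_range. induction b; simpl; auto.
  rewrite IHb by lia. replace (Nat.leb a (S b)) with false by (symmetry; apply Nat.leb_gt; lia). ring.
Qed.

Lemma sum_range_nonneg a b f : (forall k, (1 <= k)%nat -> 0 <= f k) -> 0 <= sum_range a b f.
Proof.
  intros H. apply sum1_nonneg. intros j Hj. destruct (Nat.leb a j); [apply H; lia | lra].
Qed.

Lemma sum_range_le_support a K n f : (forall k, (1 <= k)%nat -> 0 <= f k) ->
  (forall k, (n < k)%nat -> f k = 0) -> sum_range a K f <= sum_range a n f.
Proof.
  intros H0 H. apply sum1_le_support; intros j Hj; destruct (Nat.leb a j); auto; try lra.
Qed.

Lemma sum_lt_shift f m : sum_lt f (S m) = f O + sum_lt (fun t => f (S t)) m.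
Proof.
  induction m; [simpl; ring|].
  change (sum_lt f (S (S m))) with (sum_lt f (S m) + f (S m)). rewrite IHm. simpl. ring.
Qed.

Lemma prod_lt_shift f m : prod_lt f (S m) = f O * prod_lt (fun t => f (S t)) m.
Proof.
  induction m; [simpl; ring|].
  change (prod_lt f (S (S m))) with (prod_lt f (S m) * f (S m)). rewrite IHm. simpl. ring.
Qed.

Lemma sum_lt_ext f g n : (forall i, (i < n)%nat -> f i = g i) -> sum_lt f n = sum_lt g n.
Proof.
  induction n; intros H; simpl; auto.
  rewrite IHn by (intros; apply H; lia). rewrite H by lia. reflexivity.
Qed.

Lemma prod_lt_ext f g n : (forall i, (i < n)%nat -> f i = g i) -> prod_lt f n = prod_lt g n.
Proof.
  induction n; intros H; simpl; auto.
  rewrite IHn by (intros; apply H; lia). rewrite H by lia. reflexivity.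
Qed.

Section NestedIndicators.

Variable eb : nat -> bool.
Hypothesis eb_nested : forall j, (1 <= j)%nat -> eb (S j) = true -> eb j = true.

Lemma nested_down i j : (1 <= i <= j)%nat -> eb j = true -> eb i = true.
Proof.
  intros [Hi Hij]. induction Hij as [|j Hij IH]; auto.
  intros Hj. apply IH, eb_nested; auto; lia.
Qed.

Lemma sum1_nested_indicator n : exists g, (g <= n)%nat /\
  sum1 (fun j => if eb j then 1 else 0) n = INR g /\
  forall j, (1 <= j <= n)%nat -> (eb j = true <-> (j <= g)%nat).
Proof.
  induction n as [|n [g [Hg [Hsum Hj]]]].
  { exists O. simpl. split; [lia | split; [reflexivity | intros j Hj; lia]]. }
  simpl sum1. rewrite Hsum. destruct (eb (S n)) eqn:E.
  - exists (S n). assert (g = n).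
    { destruct n as [|n]; [lia|]. assert (eb (S n) = true) by (apply (nested_down _ (S (S n))); auto; lia).
      apply Hj in H; lia. }
    subst g. rewrite S_INR. split; [lia | split; [reflexivity |]].
    intros j Hj'. split; [intros _; lia | intros _; apply (nested_down _ (S n)); auto; lia].
  - exists g. split; [lia | split; [ring |]]. intros j Hj'. destruct (Nat.eq_dec j (S n)) as [->|].
    + rewrite E. split; [discriminate | lia].
    + apply Hj; lia.
Qed.

End NestedIndicators.

(** * The quadratic forms behind the variance *)

Definition vsum (q : nat -> R) (M : nat) : R :=
  sum1 (fun j => q j * (1 - q j)) M
  + 2 * sum_range 2 M (fun l => q l * sum1 (fun j => 1 - q j) (l - 1)).

Definition rsum (q : nat -> R) (K : nat) : R :=
  sum1 (fun j => (q j + 2 * sum_range (S j) K q) * (1 - q j)) K.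

Lemma vsum_0 q : vsum q 0 = 0.
Proof. unfold vsum, sum_range. simpl. ring. Qed.

Lemma vsum_S q M :
  vsum q (S M) = vsum q M + q (S M) * (1 - q (S M)) + 2 * (q (S M) * sum1 (fun j => 1 - q j) M).
Proof.
  unfold vsum, sum_range. cbn [sum1]. replace (S M - 1)%nat with M by lia.
  destruct M as [|M]; [simpl; ring|].
  replace (Nat.leb 2 (S (S M))) with true by (symmetry; apply Nat.leb_le; lia). ring.
Qed.

Lemma vsum_closed q M : vsum q M = sum1 (fun k => (2 * INR k - 1) * q k) M - (sum1 q M) ^ 2.
Proof.
  induction M; [rewrite vsum_0; simpl; ring|].
  rewrite vsum_S, IHM. cbn [sum1]. rewrite sum1_minus, sum1_const, S_INR. ring.
Qed.

Lemma rsum_eq_vsum q K : rsum q K = vsum q K.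
Proof.
  unfold rsum. induction K; [rewrite vsum_0; reflexivity|].
  rewrite vsum_S, <- IHK. simpl sum1 at 1.
  rewrite (sum1_ext (fun j => (q j + 2 * sum_range (S j) (S K) q) * (1 - q j))
                    (fun j => (q j + 2 * sum_range (S j) K q) * (1 - q j) + 2 * (q (S K) * (1 - q j)))).
  - rewrite sum1_plus, !sum1_scal, sum_range_empty by lia. ring.
  - intros j Hj. unfold sum_range. cbn [sum1].
    replace (Nat.leb (S j) (S K)) with true by (symmetry; apply Nat.leb_le; lia). ring.
Qed.

Section VsumMonotone.

Variable q : nat -> R.
Hypothesis q_range : forall j, (1 <= j)%nat -> 0 <= q j <= 1.

Lemma vsum_S_bounds M : 0 <= vsum q (S M) - vsum q M <= q (S M) * (1 + 2 * INR M).
Proof.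
  rewrite vsum_S.
  assert (Hlo : 0 <= sum1 (fun j => 1 - q j) M)
    by (apply sum1_nonneg; intros j Hj; specialize (q_range j ltac:(lia)); lra).
  assert (Hhi : sum1 (fun j => 1 - q j) M <= INR M).
  { rewrite <- (Rmult_1_r (INR M)), <- sum1_const. apply sum1_le.
    intros j Hj. specialize (q_range j ltac:(lia)); lra. }
  specialize (q_range (S M) ltac:(lia)). nra.
Qed.

Lemma vsum_mono a b : (a <= b)%nat -> vsum q a <= vsum q b.
Proof. intros Hab. induction Hab; [lra|]. pose proof (vsum_S_bounds m). lra. Qed.

End VsumMonotone.

Lemma vsum_stationary q n M : (forall j, (n < j)%nat -> q j = 0) -> (n <= M)%nat -> vsum q M = vsum q n.
Proof.
  intros H Hm. induction Hm as [|m Hm IH]; auto. rewrite vsum_S, IH, (H (S m)) by lia. ring.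
Qed.

(* The law of [Htilde n] in terms of its level probabilities [q k = P(Htilde n >= k)], [q 0] being 1. *)
Definition law_of_levels (q : nat -> R) (k : nat) : R :=
  (if Nat.eqb k 0 then 1 else q k) - q (S k).

Lemma sum_INR_mul_law q n :
  sum_f_R0 (fun k => INR k * law_of_levels q k) n = sum1 q n - INR n * q (S n).
Proof.
  unfold law_of_levels. induction n; [simpl; ring|].
  rewrite tech5, IHn. cbn [Nat.eqb sum1]. rewrite S_INR. ring.
Qed.

Lemma sum_INR_sq_mul_law q n :
  sum_f_R0 (fun k => INR k ^ 2 * law_of_levels q k) n
  = sum1 (fun k => (2 * INR k - 1) * q k) n - INR n ^ 2 * q (S n).
Proof.
  unfold law_of_levels. induction n; [simpl; ring|].
  rewrite tech5, IHn. cbn [Nat.eqb sum1]. rewrite S_INR. ring.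
Qed.

Definition bin (n k : nat) (q : R) : R :=
  if Nat.leb k n then C n k * q ^ k * (1 - q) ^ (n - k) else 0.

Lemma C_n_0 n : C n 0 = 1.
Proof. unfold C. rewrite Nat.sub_0_r. simpl. field. apply INR_fact_neq_0. Qed.

Lemma C_n_n n : C n n = 1.
Proof. unfold C. rewrite Nat.sub_diag. simpl. field. apply INR_fact_neq_0. Qed.

Lemma C_nonneg n k : 0 <= C n k.
Proof.
  unfold C, Rdiv. apply Rmult_le_pos; [apply pos_INR|].
  left. apply Rinv_0_lt_compat, Rmult_lt_0_compat; apply INR_fact_lt_0.
Qed.

Lemma bin_S_0 n q : bin (S n) 0 q = bin n 0 q * (1 - q).
Proof. unfold bin. simpl Nat.leb. rewrite !C_n_0, !Nat.sub_0_r. simpl. ring. Qed.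

Lemma bin_S_S n k q : bin (S n) (S k) q = bin n k q * q + bin n (S k) q * (1 - q).
Proof.
  unfold bin. destruct (lt_eq_lt_dec k n) as [[Hlt|<-]|Hgt].
  - replace (Nat.leb (S k) (S n)) with true by (symmetry; apply Nat.leb_le; lia).
    replace (Nat.leb k n) with true by (symmetry; apply Nat.leb_le; lia).
    replace (Nat.leb (S k) n) with true by (symmetry; apply Nat.leb_le; lia).
    rewrite <- (pascal n k Hlt).
    replace (S n - S k)%nat with (S (n - S k)) by lia.
    replace (n - k)%nat with (S (n - S k)) by lia. simpl. ring.
  - rewrite Nat.leb_refl, (proj2 (Nat.leb_gt (S k) k) ltac:(lia)).
    simpl Nat.leb. rewrite Nat.leb_refl, !Nat.sub_diag, !C_n_n. simpl. ring.
  - replace (Nat.leb (S k) (S n)) with false by (symmetry; apply Nat.leb_gt; lia).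
    replace (Nat.leb k n) with false by (symmetry; apply Nat.leb_gt; lia).
    replace (Nat.leb (S k) n) with false by (symmetry; apply Nat.leb_gt; lia). ring.
Qed.

Lemma le_mul_pow2_ratio A k l : 0 <= A -> (l <= k)%nat -> A <= A * (2 ^ k / 2 ^ l).
Proof.
  intros HA Hlk. assert (0 < 2 ^ l) by (apply pow_lt; lra).
  assert (2 ^ l <= 2 ^ k) by (apply Rle_pow; auto; lra).
  assert (1 <= 2 ^ k / 2 ^ l) by (apply Rmult_le_reg_r with (2 ^ l); [lra|]; field_simplify; lra).
  nra.
Qed.

(* Markov's inequality for [2 ^ Y], with [Y] binomial. *)
Lemma binom_upper_tail_le n l s : 0 <= s <= 1 ->
  sum_range l n (fun y => C n y * s ^ y * (1 - s) ^ (n - y)) <= (1 + s) ^ n / 2 ^ l.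
Proof.
  intros Hs. assert (H2l : 0 < 2 ^ l) by (apply pow_lt; lra).
  assert (Hterm : forall k, 0 <= C n k * s ^ k * (1 - s) ^ (n - k)).
  { intros k. apply Rmult_le_pos; [apply Rmult_le_pos|]; try apply C_nonneg; apply pow_le; lra. }
  replace ((1 + s) ^ n) with ((2 * s + (1 - s)) ^ n) by (f_equal; ring).
  rewrite binomial, sum_f_R0_sum1. unfold sum_range.
  apply Rle_trans with (sum1 (fun k => C n k * s ^ k * (1 - s) ^ (n - k) * (2 ^ k / 2 ^ l)) n).
  - apply sum1_le. intros k Hk. specialize (Hterm k).
    destruct (Nat.leb l k) eqn:E; [apply le_mul_pow2_ratio; auto; apply Nat.leb_le; auto|].
    apply Rmult_le_pos; auto. unfold Rdiv. apply Rmult_le_pos; [apply pow_le; lra | left; auto with real].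
  - rewrite (sum1_ext _ (fun k => / 2 ^ l * (C n k * (2 * s) ^ k * (1 - s) ^ (n - k))))
      by (intros; rewrite Rpow_mult_distr; field; lra).
    rewrite sum1_scal. simpl pow at 1. rewrite C_n_0, Nat.sub_0_r.
    assert (0 <= (1 - s) ^ n) by (apply pow_le; lra).
    assert (0 < / 2 ^ l) by auto with real.
    unfold Rdiv. nra.
Qed.

(* Markov's inequality for [2 ^ (-Y)], with [Y] binomial. *)
Lemma binom_lower_tail_le n a q : 0 <= q <= 1 ->
  sum_f_R0 (fun k => if Nat.leb k a then bin n k q else 0) n <= 2 ^ a * (1 - q / 2) ^ n.
Proof.
  intros Hq. replace (1 - q / 2) with (q / 2 + (1 - q)) by field.
  rewrite binomial, scal_sum. apply sum_Rle. intros k Hk.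
  assert (HA : 0 <= C n k * q ^ k * (1 - q) ^ (n - k)).
  { apply Rmult_le_pos; [apply Rmult_le_pos|]; try apply C_nonneg; apply pow_le; lra. }
  assert (0 < 2 ^ k) by (apply pow_lt; lra). assert (0 < 2 ^ a) by (apply pow_lt; lra).
  replace (C n k * (q / 2) ^ k * (1 - q) ^ (n - k) * 2 ^ a)
    with (C n k * q ^ k * (1 - q) ^ (n - k) * (2 ^ a / 2 ^ k))
    by (unfold Rdiv; rewrite Rpow_mult_distr, pow_inv; ring).
  destruct (Nat.leb k a) eqn:E.
  - unfold bin. replace (Nat.leb k n) with true by (symmetry; apply Nat.leb_le; lia).
    apply le_mul_pow2_ratio; auto. apply Nat.leb_le; auto.
  - apply Rmult_le_pos; auto. unfold Rdiv. apply Rmult_le_pos; [lra | left; auto with real].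
Qed.

Section ProbabilitySpace.

Context {Omega : Type} {ev : (Omega -> Prop) -> Prop} {P : (Omega -> Prop) -> R}.
Hypothesis HP : prob_space Omega ev P.

Lemma ev_True : ev (fun _ => True).
Proof. apply HP. Qed.

Lemma ev_not A : ev A -> ev (fun w => ~ A w).
Proof. apply HP. Qed.

Lemma ev_exists (A : nat -> Omega -> Prop) : (forall k, ev (A k)) -> ev (fun w => exists k, A k w).
Proof. apply HP. Qed.

Lemma ev_False : ev (fun _ => False).
Proof.
  replace (fun _ : Omega => False) with (fun _ : Omega => ~ True) by (apply pred_ext; tauto).
  apply ev_not, ev_True.
Qed.

Lemma ev_forall (A : nat -> Omega -> Prop) : (forall k, ev (A k)) -> ev (fun w => forall k, A k w).
Proof.
  intros HA.
  replace (fun w => forall k, A k w) with (fun w => ~ exists k, ~ A k w).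
  - apply ev_not, ev_exists. intros k; apply ev_not, HA.
  - apply pred_ext; intros w. split; [intros H k; apply NNPP; eauto | intros H [k Hk]; auto].
Qed.

Definition pair_seq (A B : Omega -> Prop) (k : nat) : Omega -> Prop :=
  match k with O => A | S O => B | _ => fun _ => False end.

Lemma exists_pair_seq A B w : (exists k, pair_seq A B k w) <-> A w \/ B w.
Proof.
  split; [intros [[|[|k]] Hk]; simpl in Hk; tauto | intros [Ha|Hb]; [exists O | exists (S O)]; auto].
Qed.

Lemma ev_or A B : ev A -> ev B -> ev (fun w => A w \/ B w).
Proof.
  intros HA HB. replace (fun w => A w \/ B w) with (fun w => exists k, pair_seq A B k w)
    by (apply pred_ext, exists_pair_seq).
  apply ev_exists. intros [|[|k]]; auto using ev_False.
Qed.

Lemma ev_and A B : ev A -> ev B -> ev (fun w => A w /\ B w).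
Proof.
  intros HA HB. replace (fun w => A w /\ B w) with (fun w => ~ (~ A w \/ ~ B w)).
  - apply ev_not, ev_or; apply ev_not; auto.
  - apply pred_ext; intros w. tauto.
Qed.

Lemma ev_and_prop A (Q : Prop) : ev A -> ev (fun w => A w /\ Q).
Proof.
  intros HA. destruct (classic Q) as [q|q].
  - replace (fun w => A w /\ Q) with A by (apply pred_ext; tauto). auto.
  - replace (fun w => A w /\ Q) with (fun _ : Omega => False) by (apply pred_ext; tauto).
    apply ev_False.
Qed.

Lemma P_ge0 A : ev A -> 0 <= P A.
Proof. apply HP. Qed.

Lemma P_True : P (fun _ => True) = 1.
Proof. apply HP. Qed.

Lemma P_False : P (fun _ => False) = 0.
Proof.
  set (p := P (fun _ => False)).
  assert (Hp : 0 <= p) by apply P_ge0, ev_False.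
  assert (Hcv := proj2 (proj2 (proj2 (proj2 (proj2 HP)))) (fun _ _ => False) (fun _ => ev_False)
                   (fun _ _ _ _ f _ => f)).
  cbv beta in Hcv.
  replace (fun w : Omega => exists _ : nat, False) with (fun _ : Omega => False) in Hcv
    by (apply pred_ext; firstorder).
  fold p in Hcv. destruct Hp as [Hp|]; auto. exfalso.
  destruct (Hcv p Hp) as [N HN]. specialize (HN (S N) ltac:(lia)).
  unfold R_dist in HN. rewrite sum_cte, !S_INR in HN. pose proof (pos_INR N).
  replace (p * (INR N + 1 + 1) - p) with (p * (INR N + 1)) in HN by ring.
  rewrite Rabs_right in HN by (apply Rle_ge, Rmult_le_pos; lra). nra.
Qed.

Lemma P_or A B : ev A -> ev B -> (forall w, A w -> B w -> False) ->
  P (fun w => A w \/ B w) = P A + P B.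
Proof.
  intros HA HB Hdisj.
  assert (Hcv := proj2 (proj2 (proj2 (proj2 (proj2 HP)))) (pair_seq A B)).
  replace (fun w => exists k, pair_seq A B k w) with (fun w => A w \/ B w) in Hcv
    by (apply pred_ext; intros w; symmetry; apply exists_pair_seq).
  apply (UL_sequence (fun N => sum_f_R0 (fun k => P (pair_seq A B k)) N)).
  - apply Hcv; [intros [|[|k]]; auto using ev_False|].
    intros [|[|k]] [|[|l]] w Hkl; simpl; intuition eauto.
  - intros e He. exists 1%nat. intros n Hn. unfold R_dist.
    replace (sum_f_R0 (fun k => P (pair_seq A B k)) n) with (P A + P B);
      [rewrite Rminus_diag, Rabs_R0; auto|].
    destruct n as [|n]; [lia|]. clear Hn. induction n; [reflexivity|].
    rewrite tech5, <- IHn. simpl. rewrite P_False. ring.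
Qed.

Lemma P_not A : ev A -> P (fun w => ~ A w) = 1 - P A.
Proof.
  intros HA. rewrite <- P_True.
  replace (fun _ : Omega => True) with (fun w => A w \/ ~ A w)
    by (apply pred_ext; intros w; split; auto using classic).
  rewrite P_or; auto using ev_not. ring.
Qed.

Lemma P_diff A B : ev A -> ev B -> (forall w, B w -> A w) ->
  P (fun w => A w /\ ~ B w) = P A - P B.
Proof.
  intros HA HB Hsub.
  replace (P A) with (P (fun w => B w \/ (A w /\ ~ B w))).
  - rewrite P_or; auto using ev_and, ev_not. ring. tauto.
  - f_equal. apply pred_ext; intros w. destruct (classic (B w)); intuition.
Qed.

Lemma P_mono A B : ev A -> ev B -> (forall w, A w -> B w) -> P A <= P B.
Proof.
  intros HA HB Hsub. assert (0 <= P (fun w => B w /\ ~ A w)) by auto using P_ge0, ev_and, ev_not.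
  rewrite P_diff in H; auto. lra.
Qed.

Lemma P_le1 A : ev A -> P A <= 1.
Proof. intros HA. rewrite <- P_True. apply P_mono; auto using ev_True. Qed.

End ProbabilitySpace.

(** * Decay estimates *)

Lemma pow_ge_quadratic x a : 0 <= x -> 1 + INR a * x + INR a * (INR a - 1) / 2 * x ^ 2 <= (1 + x) ^ a.
Proof.
  intros Hx. induction a; [simpl; lra|].
  rewrite S_INR. replace ((1 + x) ^ S a) with ((1 + x) ^ a * (1 + x)) by (simpl; ring).
  assert (Ha : 0 <= INR a * (INR a - 1))
    by (destruct a; [simpl; lra | rewrite S_INR; pose proof (pos_INR a); nra]).
  assert (0 <= INR a * (INR a - 1) * (x ^ 2 * x)) by (apply Rmult_le_pos; [|apply Rmult_le_pos]; nra).
  apply Rle_trans with ((1 + INR a * x + INR a * (INR a - 1) / 2 * x ^ 2) * (1 + x));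
    [|apply Rmult_le_compat_r; lra].
  replace ((1 + INR a * x + INR a * (INR a - 1) / 2 * x ^ 2) * (1 + x))
    with (1 + (INR a + 1) * x + (INR a + 1) * (INR a + 1 - 1) / 2 * x ^ 2
          + INR a * (INR a - 1) * (x ^ 2 * x) / 2) by (simpl; field).
  lra.
Qed.

Lemma INR_mul_pow_cv0 r : 0 < r < 1 ->
  forall e, 0 < e -> exists N, forall a, (N <= a)%nat -> INR a * r ^ a < e.
Proof.
  intros Hr e He. set (x := / r - 1).
  assert (Hx : 0 < x)
    by (unfold x; assert (1 < / r) by (rewrite <- Rinv_1; apply Rinv_lt_contravar; lra); lra).
  destruct (INR_archimed (e * x ^ 2) 4) as [N HN]; [apply Rmult_lt_0_compat; auto; nra|].
  exists (Nat.max N 2). intros a Ha.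
  assert (HA : 2 <= INR a) by (replace 2 with (INR 2) by (simpl; lra); apply le_INR; lia).
  assert (HNa : INR N <= INR a) by (apply le_INR; lia).
  assert (Hpow : (1 + x) ^ a * r ^ a = 1).
  { rewrite <- Rpow_mult_distr. unfold x. replace ((1 + (/ r - 1)) * r) with 1 by (field; lra). apply pow1. }
  assert (Hrp : 0 < r ^ a) by (apply pow_lt; lra).
  assert (Hq : INR a ^ 2 * x ^ 2 / 4 <= (1 + x) ^ a).
  { apply Rle_trans with (2 := pow_ge_quadratic x a (Rlt_le _ _ Hx)).
    assert (0 <= INR a * x) by nra. assert (0 <= x ^ 2) by nra. nra. }
  assert (INR a * r ^ a * (INR a * x ^ 2 / 4) <= 1).
  { replace (INR a * r ^ a * (INR a * x ^ 2 / 4)) with ((INR a ^ 2 * x ^ 2 / 4) * r ^ a)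
      by (unfold Rdiv; ring).
    rewrite <- Hpow. apply Rmult_le_compat_r; lra. }
  assert (e * (INR a * x ^ 2 / 4) > 1).
  { assert (INR a * (e * x ^ 2) > 4)
      by (apply Rlt_le_trans with (INR N * (e * x ^ 2)); auto; apply Rmult_le_compat_r; nra).
    nra. }
  assert (0 < INR a * x ^ 2 / 4) by nra.
  nra.
Qed.

Lemma sum_lt_weighted_geom_le r a d : 0 < r < 1 ->
  sum_lt (fun i => INR (a + i) * r ^ (a + i)) d <= r ^ a * (INR a / (1 - r) + 1 / (1 - r) ^ 2).
Proof.
  intros Hr. revert a. induction d as [|d IH]; intros a.
  - cbn [sum_lt]. assert (0 < r ^ a) by (apply pow_lt; lra).
    apply Rmult_le_pos; [lra|]. apply Rplus_le_le_0_compat; unfold Rdiv.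
    + apply Rmult_le_pos; [apply pos_INR | left; apply Rinv_0_lt_compat; lra].
    + rewrite Rmult_1_l. left. apply Rinv_0_lt_compat, pow_lt. lra.
  - rewrite sum_lt_shift, Nat.add_0_r.
    rewrite (sum_lt_ext _ (fun i => INR (S a + i) * r ^ (S a + i)))
      by (intros; rewrite Nat.add_succ_r; reflexivity).
    specialize (IH (S a)). assert (0 < r ^ a) by (apply pow_lt; lra).
    assert (r ^ a * (INR a / (1 - r) + 1 / (1 - r) ^ 2)
            - (INR a * r ^ a + r ^ S a * (INR (S a) / (1 - r) + 1 / (1 - r) ^ 2)) = r ^ a)
      by (rewrite S_INR; simpl; field; lra).
    lra.
Qed.

(* Decay rates of the upper binomial tail beyond [2 h_n] and of the lower tail below [2 h_n / 3]. *)
Definition rho : R := exp (1 / 2) / 2.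
Definition sig : R := 2 * exp (- (3 / 4)).

Lemma rho_range : 0 < rho < 1.
Proof.
  unfold rho. pose proof (exp_pos (1 / 2)). pose proof exp_le_3.
  assert (exp (1 / 2) * exp (1 / 2) = exp 1) by (rewrite <- exp_plus; f_equal; field).
  split; nra.
Qed.

Lemma sig_range : 0 < sig < 1.
Proof.
  unfold sig. pose proof (exp_pos (- (3 / 4))). split; [lra|].
  assert (E : exp (3 / 4) = exp (3 / 32) ^ 8) by (rewrite <- exp_INR_mul; f_equal; simpl; field).
  assert ((1 + 3 / 32) ^ 8 <= exp (3 / 32) ^ 8) by (apply pow_incr; pose proof (exp_ineq1_le (3 / 32)); lra).
  assert (2 < (1 + 3 / 32) ^ 8) by (simpl; lra).
  rewrite exp_Ropp. apply Rmult_lt_reg_r with (exp (3 / 4)); [apply exp_pos|].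
  rewrite Rmult_assoc, Rinv_l by (pose proof (exp_pos (3 / 4)); lra). lra.
Qed.

Definition tail_bound (K : nat) : R :=
  3 * (rho ^ S K * (INR (S K) / (1 - rho) + 1 / (1 - rho) ^ 2)).

Lemma tail_bound_nonneg K : 0 <= tail_bound K.
Proof.
  unfold tail_bound. destruct rho_range. pose proof (pow_lt rho (S K) ltac:(lra)).
  assert (0 <= INR (S K) / (1 - rho))
    by (apply Rmult_le_pos; [apply pos_INR | left; apply Rinv_0_lt_compat; lra]).
  assert (0 < 1 / (1 - rho) ^ 2) by (apply Rdiv_lt_0_compat, pow_lt; lra).
  nra.
Qed.

Lemma tail_bound_cv0 e : 0 < e -> exists A, forall K, (A <= K)%nat -> tail_bound K < e.
Proof.
  intros He. destruct rho_range as [R0 R1].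
  set (c1 := / (1 - rho)). set (c2 := 1 / (1 - rho) ^ 2).
  assert (Hc1 : 0 < c1) by (unfold c1; apply Rinv_0_lt_compat; lra).
  assert (Hc2 : 0 < c2) by (unfold c2, Rdiv; rewrite Rmult_1_l; apply Rinv_0_lt_compat, pow_lt; lra).
  destruct (INR_mul_pow_cv0 rho rho_range (e / (6 * c1))) as [N1 HN1]; [apply Rdiv_lt_0_compat; lra|].
  destruct (pow_lt_1_zero rho ltac:(rewrite Rabs_pos_eq; lra) (e / (6 * c2))) as [N2 HN2];
    [apply Rdiv_lt_0_compat; lra|].
  exists (Nat.max N1 N2). intros K HK.
  specialize (HN1 (S K) ltac:(lia)). specialize (HN2 (S K) ltac:(lia)).
  rewrite Rabs_pos_eq in HN2 by (apply pow_le; lra).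
  unfold tail_bound. fold c2. unfold Rdiv at 1. fold c1.
  assert (INR (S K) * rho ^ S K * c1 < e / 6)
    by (replace (e / 6) with (e / (6 * c1) * c1) by (field; lra); apply Rmult_lt_compat_r; auto).
  assert (rho ^ S K * c2 < e / 6)
    by (replace (e / 6) with (e / (6 * c2) * c2) by (field; lra); apply Rmult_lt_compat_r; auto).
  lra.
Qed.

Lemma Un_cv_div_1 (a b : nat -> R) c N : 0 < c -> (forall n, (N <= n)%nat -> c <= a n) ->
  Un_cv (fun n => a n - b n) 0 -> Un_cv (fun n => a n / b n) 1.
Proof.
  intros Hc Ha Hab e He.
  destruct (Hab (Rmin (c / 2) (e * c / 2))) as [N1 HN1]; [apply Rmin_glb_lt; nra|].
  exists (Nat.max N N1). intros n Hn.
  specialize (Ha n ltac:(lia)). specialize (HN1 n ltac:(lia)).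
  unfold R_dist in *. rewrite Rminus_0_r in HN1.
  pose proof (Rmin_l (c / 2) (e * c / 2)). pose proof (Rmin_r (c / 2) (e * c / 2)).
  pose proof (Rle_abs (a n - b n)). pose proof (Rle_abs (- (a n - b n))). rewrite Rabs_Ropp in *.
  assert (Hb : c / 2 <= b n) by lra.
  replace (a n / b n - 1) with ((a n - b n) / b n) by (field; lra).
  unfold Rdiv. rewrite Rabs_mult, (Rabs_pos_eq (/ b n)) by (left; apply Rinv_0_lt_compat; lra).
  apply Rmult_lt_reg_r with (b n); [lra|]. rewrite Rmult_assoc, Rinv_l, Rmult_1_r by lra. nra.
Qed.

Lemma Un_cv_squeeze_0 (u v : nat -> R) N : (forall n, (N <= n)%nat -> 0 <= u n <= v n) ->
  Un_cv v 0 -> Un_cv u 0.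
Proof.
  intros Huv Hv e He. destruct (Hv e He) as [N1 HN1]. exists (Nat.max N N1). intros n Hn.
  specialize (Huv n ltac:(lia)). specialize (HN1 n ltac:(lia)). unfold R_dist in *.
  rewrite Rminus_0_r in *. rewrite Rabs_pos_eq in * by lra. lra.
Qed.

Definition gtb (a x : R) : bool := if Rlt_dec a x then true else false.
Definition geb (a x : R) : bool := if Rle_dec a x then true else false.

Lemma gtb_true a x : gtb a x = true <-> a < x.
Proof. unfold gtb; destruct (Rlt_dec a x); split; auto; discriminate. Qed.

Lemma geb_true a x : geb a x = true <-> a <= x.
Proof. unfold geb; destruct (Rle_dec a x); split; auto; discriminate. Qed.

Lemma borel_gtb a : borel (fun x => gtb a x = true).
Proof.
  replace (fun x => gtb a x = true) with (fun x => a < x)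
    by (apply pred_ext; intros x; rewrite gtb_true; tauto).
  apply borel_half.
Qed.

Lemma borel_geb a : borel (fun x => geb a x = true).
Proof.
  replace (fun x => geb a x = true) with (fun x => ~ exists k : nat, ~ a - / (INR k + 1) < x).
  - apply borel_compl, borel_union. intros k. apply borel_compl, borel_half.
  - apply pred_ext; intros x; rewrite geb_true; split.
    + intros H. apply Rle_of_forall_sub_inv. intros k. apply Rnot_lt_le; intros Hlt.
      apply H. exists k. intros Hk. pose proof (inv_INR_succ_pos k). lra.
    + intros Hax [k Hk]. apply Hk. pose proof (inv_INR_succ_pos k). lra.
Qed.

Definition upd (Cs : nat -> R -> Prop) (n : nat) (B : R -> Prop) (i : nat) : R -> Prop :=
  if Nat.eqb i n then B else Cs i.

Section IidSample.

Context {Omega : Type} {ev : (Omega -> Prop) -> Prop} {P : (Omega -> Prop) -> R}.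
Variable X : nat -> Omega -> R.
Hypotheses (HP : prob_space Omega ev P) (HI : iid_seq Omega ev P X).

Fixpoint nhits (b : R -> bool) (w : Omega) (n : nat) : nat :=
  match n with O => O | S m => (nhits b w m + if b (X m w) then 1 else 0)%nat end.

Lemma nhits_le b w n : (nhits b w n <= n)%nat.
Proof. induction n; simpl; auto. destruct (b (X n w)); lia. Qed.

Lemma nhits_mono (b1 b2 : R -> bool) w n :
  (forall x, b1 x = true -> b2 x = true) -> (nhits b1 w n <= nhits b2 w n)%nat.
Proof.
  intros H. induction n; simpl; auto.
  destruct (b1 (X n w)) eqn:E1; [rewrite (H _ E1); lia | destruct (b2 (X n w)); lia].
Qed.

Lemma ev_X i B : borel B -> ev (fun w => B (X i w)).
Proof. apply HI. Qed.

Lemma P_X i B : borel B -> P (fun w => B (X i w)) = P (fun w => B (X 0%nat w)).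
Proof. apply HI. Qed.

Lemma ev_nhits_eq b : borel (fun x => b x = true) -> forall n k, ev (fun w => nhits b w n = k).
Proof.
  intros Hb n. induction n; intros k; simpl.
  - replace (fun _ : Omega => 0%nat = k) with (fun _ : Omega => True /\ 0%nat = k)
      by (apply pred_ext; tauto).
    apply (ev_and_prop HP), (ev_True HP).
  - replace (fun w => (nhits b w n + (if b (X n w) then 1 else 0))%nat = k) with
      (fun w => (nhits b w n = k /\ ~ b (X n w) = true)
             \/ ((nhits b w n = pred k /\ b (X n w) = true) /\ (1 <= k)%nat)).
    + apply (ev_or HP); [|apply (ev_and_prop HP)]; apply (ev_and HP); auto;
        [apply (ev_not HP)|]; exact (ev_X _ _ Hb).
    + apply pred_ext; intros w. destruct (b (X n w)); cbv beta iota.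
      * split; [intros [[_ H]|[[H _] Hk]]; [easy | lia] | intros H; right; repeat split; lia].
      * split; [intros [[H _]|[[_ H] _]]; [lia | discriminate] | intros H; left; split; [lia | discriminate]].
Qed.

Lemma ev_nhits b : borel (fun x => b x = true) -> forall n (Q : nat -> Prop), ev (fun w => Q (nhits b w n)).
Proof.
  intros Hb n Q.
  replace (fun w => Q (nhits b w n)) with (fun w => exists k, nhits b w n = k /\ Q k).
  - apply (ev_exists HP). intros k. apply (ev_and_prop HP), ev_nhits_eq, Hb.
  - apply pred_ext; intros w; split; [intros [k [<- Hk]]; auto | eauto].
Qed.

Definition tail_ev (Cs : nat -> R -> Prop) (a m : nat) (w : Omega) : Prop :=
  forall t, (t < m)%nat -> Cs (a + t)%nat (X (a + t)%nat w).

Lemma ev_tail Cs : (forall i, borel (Cs i)) -> forall a m, ev (tail_ev Cs a m).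
Proof.
  intros HC a m. induction m.
  - replace (tail_ev Cs a 0) with (fun _ : Omega => True)
      by (apply pred_ext; split; [intros _ t Ht; lia | auto]).
    apply (ev_True HP).
  - replace (tail_ev Cs a (S m)) with (fun w => tail_ev Cs a m w /\ Cs (a + m)%nat (X (a + m)%nat w)).
    + apply (ev_and HP); auto. apply ev_X, HC.
    + apply pred_ext; intros w; split.
      * intros [H1 H2] t Ht. destruct (Nat.eq_dec t m); [subst; auto | apply H1; lia].
      * intros H; split; [intros t Ht|]; apply H; lia.
Qed.

Lemma tail_ev_upd Cs n B m w :
  tail_ev (upd Cs n B) n (S m) w <-> B (X n w) /\ tail_ev Cs (S n) m w.
Proof.
  unfold tail_ev, upd. split.
  - intros H. split.
    + specialize (H O ltac:(lia)). rewrite Nat.add_0_r, Nat.eqb_refl in H. auto.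
    + intros t Ht. specialize (H (S t) ltac:(lia)). rewrite Nat.add_succ_r in H.
      rewrite (proj2 (Nat.eqb_neq _ _)) in H by lia. auto.
  - intros [H0 H] t Ht. destruct t as [|t].
    + rewrite Nat.add_0_r, Nat.eqb_refl. auto.
    + rewrite Nat.add_succ_r, (proj2 (Nat.eqb_neq _ _)) by lia. apply (H t); lia.
Qed.

Lemma P_nhits_0_tail b k m Cs : (forall i, borel (Cs i)) ->
  P (fun w => nhits b w 0 = k /\ tail_ev Cs 0 m w)
  = bin 0 k (P (fun w => b (X 0%nat w) = true)) *
    prod_lt (fun t => P (fun w => Cs t (X t w))) m.
Proof.
  intros HC. destruct k as [|k].
  - replace (fun w => nhits b w 0 = 0%nat /\ tail_ev Cs 0 m w)
      with (fun w => forall i, (i < m)%nat -> Cs i (X i w))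
      by (apply pred_ext; intros w; unfold tail_ev; simpl; tauto).
    rewrite (proj2 (proj2 HI) m Cs HC). unfold bin. simpl. rewrite C_n_0. ring.
  - unfold bin; simpl Nat.leb; cbv iota. rewrite Rmult_0_l, <- (P_False HP). f_equal.
    apply pred_ext; intros w; split; [intros [H _]; discriminate | intros []].
Qed.

Lemma P_nhits_tail b : borel (fun x => b x = true) ->
  forall n k m Cs, (forall i, borel (Cs i)) ->
  P (fun w => nhits b w n = k /\ tail_ev Cs n m w)
  = bin n k (P (fun w => b (X 0%nat w) = true)) *
    prod_lt (fun t => P (fun w => Cs (n + t)%nat (X (n + t)%nat w))) m.
Proof.
  intros Hb n. set (q := P (fun w => b (X 0%nat w) = true)).
  induction n as [|n IH]; intros k m Cs HC; [apply P_nhits_0_tail; auto|].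
  (* Induction on [n]: the [n]-th coordinate is moved from the count into the tail event. *)
  assert (peel : forall k' B r, borel B -> P (fun w => B (X 0%nat w)) = r ->
    P (fun w => nhits b w n = k' /\ B (X n w) /\ tail_ev Cs (S n) m w)
    = bin n k' q * r * prod_lt (fun t => P (fun w => Cs (S n + t)%nat (X (S n + t)%nat w))) m).
  { intros k' B r HB <-.
    assert (HCB : forall i, borel (upd Cs n B i)) by (intros i; unfold upd; destruct (Nat.eqb i n); auto).
    replace (fun w => nhits b w n = k' /\ B (X n w) /\ tail_ev Cs (S n) m w)
      with (fun w => nhits b w n = k' /\ tail_ev (upd Cs n B) n (S m) w)
      by (apply pred_ext; intros w; rewrite tail_ev_upd; tauto).
    rewrite (IH k' (S m) _ HCB), prod_lt_shift, Nat.add_0_r, Rmult_assoc.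
    unfold upd at 1. rewrite Nat.eqb_refl, (P_X n B HB). f_equal. f_equal.
    apply prod_lt_ext. intros t _. rewrite Nat.add_succ_r. unfold upd.
    rewrite (proj2 (Nat.eqb_neq _ _)) by lia. reflexivity. }
  assert (ev_peel : forall k' B, borel B ->
    ev (fun w => nhits b w n = k' /\ B (X n w) /\ tail_ev Cs (S n) m w)).
  { intros k' B HB. apply (ev_and HP); [apply ev_nhits_eq, Hb|].
    apply (ev_and HP); [apply ev_X, HB | apply ev_tail, HC]. }
  assert (Hnot : P (fun w => ~ b (X 0%nat w) = true) = 1 - q)
    by (apply (P_not HP); exact (ev_X _ _ Hb)).
  simpl nhits. destruct k as [|k].
  - rewrite bin_S_0, <- (peel 0%nat (fun x => ~ b x = true)) by auto using borel_compl.
    f_equal. apply pred_ext; intros w. destruct (b (X n w)); simpl; split;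
      [intros [H T]; lia | intros [_ [F _]]; easy
      | intros [H T]; split; [lia | split; [discriminate | exact T]] | intros [H [_ T]]; split; auto; lia].
  - rewrite bin_S_S, Rmult_plus_distr_r.
    rewrite <- (peel k (fun x => b x = true)), <- (peel (S k) (fun x => ~ b x = true))
      by auto using borel_compl.
    rewrite <- (P_or HP).
    + f_equal. apply pred_ext; intros w. destruct (b (X n w)); simpl; split.
      * intros [H T]; left; split; [lia | split; [reflexivity | exact T]].
      * intros [[H [_ T]]|[_ [F _]]]; [split; auto; lia | easy].
      * intros [H T]; right; split; [lia | split; [discriminate | exact T]].
      * intros [[_ [F _]]|[H [_ T]]]; [discriminate | split; auto; lia].
    + exact (ev_peel _ _ Hb).
    + exact (ev_peel _ _ (borel_compl _ Hb)).
    + intros w [_ [H1 _]] [_ [H2 _]]; auto.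
Qed.

Lemma P_nhits_eq b : borel (fun x => b x = true) -> forall n k,
  P (fun w => nhits b w n = k) = bin n k (P (fun w => b (X 0%nat w) = true)).
Proof.
  intros Hb n k.
  assert (Hpos : forall i : nat, borel (fun x => 0 < x)) by (intros; apply borel_half).
  pose proof (P_nhits_tail b Hb n k 0 _ Hpos) as Htail.
  simpl prod_lt in Htail. rewrite Rmult_1_r in Htail. rewrite <- Htail.
  f_equal. apply pred_ext; intros w; unfold tail_ev; split; [intros H; split; auto; intros; lia | tauto].
Qed.

Lemma P_nhits_sat b : borel (fun x => b x = true) -> forall (phi : nat -> bool) n,
  P (fun w => phi (nhits b w n) = true)
  = sum_f_R0 (fun k => if phi k then bin n k (P (fun w => b (X 0%nat w) = true)) else 0) n.
Proof.
  intros Hb phi n.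
  assert (Hk : forall k, P (fun w => nhits b w n = k /\ phi k = true)
                        = if phi k then bin n k (P (fun w => b (X 0%nat w) = true)) else 0).
  { intros k. destruct (phi k).
    - rewrite <- P_nhits_eq by auto. f_equal. apply pred_ext; tauto.
    - rewrite <- (P_False HP). f_equal. apply pred_ext; intuition discriminate. }
  assert (Hle : forall M, P (fun w => (nhits b w n <= M)%nat /\ phi (nhits b w n) = true)
     = sum_f_R0 (fun k => if phi k then bin n k (P (fun w => b (X 0%nat w) = true)) else 0) M).
  { induction M; simpl sum_f_R0.
    - rewrite <- Hk. f_equal. apply pred_ext; intros w.
      split; intros [H1 H2].
      + assert (E : nhits b w n = O) by lia. rewrite E in *. auto.
      + rewrite H1. auto.
    - rewrite <- IHM, <- Hk, <- (P_or HP).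
      + f_equal. apply pred_ext; intros w. split.
        * intros [H1 H2].
          destruct (Nat.eq_dec (nhits b w n) (S M)) as [E|]; [right; rewrite <- E | left]; auto.
          split; auto; lia.
        * intros [[H1 H2]|[H1 H2]]; [split; auto | rewrite H1; split; auto].
      + apply (ev_nhits b Hb n (fun c => (c <= M)%nat /\ phi c = true)).
      + apply (ev_and_prop HP), ev_nhits_eq, Hb.
      + intros w [H1 _] [H2 _]. lia. }
  rewrite <- Hle. f_equal. apply pred_ext; intros w; split; [split; auto; apply nhits_le | tauto].
Qed.

Lemma ev_gtb i a : ev (fun w => gtb a (X i w) = true).
Proof. exact (ev_X i _ (borel_gtb a)). Qed.

Lemma ev_geb i a : ev (fun w => geb a (X i w) = true).
Proof. exact (ev_X i _ (borel_geb a)). Qed.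

Lemma Ssurv_eq a : P (fun w => gtb a (X 0%nat w) = true) = Ssurv P X a.
Proof. unfold Ssurv. f_equal. apply pred_ext; intros w. rewrite gtb_true. lra. Qed.

Lemma Sminus_eq a : P (fun w => geb a (X 0%nat w) = true) = Sminus P X a.
Proof. unfold Sminus. f_equal. apply pred_ext; intros w. rewrite geb_true. lra. Qed.

Lemma Ssurv_range x : 0 <= Ssurv P X x <= 1.
Proof.
  rewrite <- Ssurv_eq. pose proof (ev_gtb 0 x). split; [apply (P_ge0 HP) | apply (P_le1 HP)]; auto.
Qed.

Lemma Sminus_range x : 0 <= Sminus P X x <= 1.
Proof.
  rewrite <- Sminus_eq. pose proof (ev_geb 0 x). split; [apply (P_ge0 HP) | apply (P_le1 HP)]; auto.
Qed.

Lemma Ssurv_le_Sminus z x : z <= x -> Ssurv P X x <= Sminus P X z.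
Proof.
  intros Hzx. rewrite <- Ssurv_eq, <- Sminus_eq.
  apply (P_mono HP); [apply ev_gtb | apply ev_geb |].
  intros w. rewrite gtb_true, geb_true. lra.
Qed.

Lemma Sminus_antitone y x : y <= x -> Sminus P X x <= Sminus P X y.
Proof.
  intros Hyx. rewrite <- !Sminus_eq.
  apply (P_mono HP); [apply ev_geb | apply ev_geb |].
  intros w. rewrite !geb_true. lra.
Qed.

(* [hcond n j] is the event [n * Shat n (j - 1) >= j] whose indicators add up to [Htilde n]. *)
Definition hcond (n j : nat) (w : Omega) : Prop := (j <= nhits (gtb (INR j - 1)) w n)%nat.

Lemma hcond_S n j w : hcond n (S j) w -> hcond n j w.
Proof.
  unfold hcond. intros H.
  enough (nhits (gtb (INR (S j) - 1)) w n <= nhits (gtb (INR j - 1)) w n)%nat by lia.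
  apply nhits_mono. intros x. rewrite !gtb_true, S_INR. lra.
Qed.

Lemma ev_hcond n j : ev (hcond n j).
Proof. exact (ev_nhits _ (borel_gtb _) n (fun c => (j <= c)%nat)). Qed.

Lemma P_hcond n j : (1 <= j <= n)%nat -> P (hcond n j) = pjn P X j n.
Proof.
  intros Hj.
  replace (hcond n j) with (fun w => Nat.leb j (nhits (gtb (INR j - 1)) w n) = true)
    by (apply pred_ext; intros w; unfold hcond; rewrite Nat.leb_le; tauto).
  rewrite (P_nhits_sat _ (borel_gtb _)), Ssurv_eq, sum_f_R0_sum1.
  unfold pjn, sum_range. rewrite (proj2 (Nat.leb_le j n)) by lia.
  replace (Nat.leb j 0) with false by (symmetry; apply Nat.leb_gt; lia). rewrite Rplus_0_l.
  apply sum1_ext. intros k Hk. destruct (Nat.leb j k); auto.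
  unfold bin. rewrite (proj2 (Nat.leb_le k n)) by lia. reflexivity.
Qed.

Lemma pjn_beyond n j : (n < j)%nat -> pjn P X j n = 0.
Proof. intros H. unfold pjn. rewrite (proj2 (Nat.leb_gt j n)) by lia. reflexivity. Qed.

Lemma pjn_range n j : (1 <= j)%nat -> 0 <= pjn P X j n <= 1.
Proof.
  intros Hj. destruct (le_lt_dec j n).
  - rewrite <- P_hcond by lia. pose proof (ev_hcond n j).
    split; [apply (P_ge0 HP) | apply (P_le1 HP)]; auto.
  - rewrite pjn_beyond by lia. lra.
Qed.

Lemma sum_lt_indicator_nhits (b : R -> bool) w n :
  sum_lt (fun i => if b (X i w) then 1 else 0) n = INR (nhits b w n).
Proof.
  induction n; cbn [sum_lt nhits]; auto.
  rewrite IHn, plus_INR. destruct (b (X n w)); simpl; ring.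
Qed.

Lemma nShat n w x : (1 <= n)%nat -> INR n * Shat X n w x = INR (nhits (gtb x) w n).
Proof.
  intros Hn. unfold Shat. rewrite <- Rmult_assoc, Rinv_r, Rmult_1_l by (apply not_0_INR; lia).
  rewrite <- sum_lt_indicator_nhits. apply sum_lt_ext. intros i _. unfold gtb.
  destruct (Rlt_dec x (X i w)); reflexivity.
Qed.

Lemma nShatm n w x : (1 <= n)%nat -> INR n * Shatm X n w x = INR (nhits (geb x) w n).
Proof.
  intros Hn. unfold Shatm. rewrite <- Rmult_assoc, Rinv_r, Rmult_1_l by (apply not_0_INR; lia).
  rewrite <- sum_lt_indicator_nhits. apply sum_lt_ext. intros i _. unfold geb.
  destruct (Rle_dec x (X i w)); reflexivity.
Qed.

Lemma Htilde_eq_iff n k w : (1 <= n)%nat -> (k <= n)%nat ->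
  (Htilde X n w = INR k <-> hcond n k w /\ ~ hcond n (S k) w).
Proof.
  intros Hn Hk. assert (Hn0 : 0 < INR n) by (apply lt_0_INR; lia).
  set (eb := fun j => if Rle_dec (INR j / INR n) (Shat X n w (INR j - 1)) then true else false).
  assert (Heb : forall j, eb j = true <-> hcond n j w).
  { intros j. unfold eb, hcond.
    assert (E : INR j / INR n <= Shat X n w (INR j - 1) <-> (j <= nhits (gtb (INR j - 1)) w n)%nat).
    { split; intros H.
      - apply INR_le. rewrite <- nShat by auto.
        apply Rle_trans with (INR n * (INR j / INR n)); [right; field; lra | apply Rmult_le_compat_l; lra].
      - apply le_INR in H. rewrite <- nShat in H by auto. apply Rmult_le_reg_l with (INR n); auto.
        replace (INR n * (INR j / INR n)) with (INR j) by (field; lra). auto. }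
    destruct (Rle_dec _ _) as [r|r]; rewrite <- E; split; intros H;
      solve [auto | discriminate | contradiction]. }
  assert (Hsum : Htilde X n w = sum1 (fun j => if eb j then 1 else 0) n).
  { apply sum1_ext. intros j _. unfold eb. destruct (Rle_dec _ _); reflexivity. }
  destruct (sum1_nested_indicator eb) with (n := n) as [g [Hg [Hs Hj]]].
  { intros j _ H. apply Heb, hcond_S, Heb, H. }
  rewrite Hsum, Hs. split.
  - intros E. apply INR_eq in E. subst g. split.
    + destruct k as [|k]; [unfold hcond; lia | apply Heb, Hj; lia].
    + intros H. destruct (le_lt_dec (S k) n).
      * apply Heb, Hj in H; lia.
      * unfold hcond in H. pose proof (nhits_le (gtb (INR (S k) - 1)) w n). lia.
  - intros [H1 H2]. f_equal. apply Nat.le_antisymm.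
    + destruct (le_lt_dec g k); auto. exfalso. apply H2, Heb, Hj; lia.
    + destruct k as [|k]; [lia|]. apply Hj; [lia | apply Heb; auto].
Qed.

Lemma VarHtilde_eq_vsum n : (1 <= n)%nat -> VarHtilde P X n = vsum (fun j => pjn P X j n) n.
Proof.
  intros Hn. set (q := fun j => pjn P X j n).
  assert (Hlaw : forall k, (k <= n)%nat -> P (fun w => Htilde X n w = INR k) = law_of_levels q k).
  { intros k Hk.
    replace (fun w => Htilde X n w = INR k) with (fun w => hcond n k w /\ ~ hcond n (S k) w)
      by (apply pred_ext; intros w; rewrite Htilde_eq_iff; tauto).
    rewrite (P_diff HP) by auto using ev_hcond, hcond_S.
    unfold law_of_levels. f_equal.
    - destruct k as [|k]; simpl; [|apply P_hcond; lia].
      rewrite <- (P_True HP). f_equal. apply pred_ext; intros w; unfold hcond; split; auto; lia.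
    - destruct (Nat.eq_dec k n) as [->|].
      + unfold q. rewrite pjn_beyond, <- (P_False HP) by lia. f_equal.
        apply pred_ext; intros w; unfold hcond; split; [|intros []].
        pose proof (nhits_le (gtb (INR (S n) - 1)) w n). lia.
      + apply P_hcond. lia. }
  unfold VarHtilde.
  rewrite (sum_eq (fun k => INR k ^ 2 * P (fun w => Htilde X n w = INR k))
                  (fun k => INR k ^ 2 * law_of_levels q k)) by (intros; rewrite Hlaw; auto).
  rewrite (sum_eq (fun k => INR k * P (fun w => Htilde X n w = INR k))
                  (fun k => INR k * law_of_levels q k)) by (intros; rewrite Hlaw; auto).
  rewrite sum_INR_mul_law, sum_INR_sq_mul_law, vsum_closed.
  replace (q (S n)) with 0 by (unfold q; rewrite pjn_beyond; auto). ring.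
Qed.

Lemma Vn_eq_vsum M n : Vn P X M n = vsum (fun j => pjn P X j n) M.
Proof. reflexivity. Qed.

Lemma sum_rtjn_eq_vsum K n :
  sum1 (fun j => rtjn P X K j n * (1 - pjn P X j n)) K = vsum (fun j => pjn P X j n) K.
Proof. apply rsum_eq_vsum. Qed.

Lemma vsum_le_VarHtilde n M : (1 <= n)%nat -> vsum (fun j => pjn P X j n) M <= VarHtilde P X n.
Proof.
  intros Hn. rewrite VarHtilde_eq_vsum by auto. destruct (le_lt_dec M n).
  - apply vsum_mono; auto using pjn_range.
  - rewrite (vsum_stationary _ n M); [lra | intros; apply pjn_beyond | ]; lia.
Qed.

Lemma VarHtilde_ge_sum_rjn n K : (1 <= n)%nat ->
  VarHtilde P X n >= sum1 (fun j => rjn P X j n * (1 - pjn P X j n)) K.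
Proof.
  intros Hn. rewrite VarHtilde_eq_vsum, <- rsum_eq_vsum by auto. apply Rle_ge, sum1_le_support.
  - intros j Hj. unfold rjn. pose proof (pjn_range n j Hj).
    assert (0 <= sum_range (S j) n (fun l => pjn P X l n))
      by (apply sum_range_nonneg; intros; apply pjn_range; auto).
    apply Rmult_le_pos; lra.
  - intros j Hj. unfold rjn. rewrite pjn_beyond, sum_range_empty by lia. ring.
Qed.

Lemma sum_rjn_ge_sum_rtjn n K :
  sum1 (fun j => rjn P X j n * (1 - pjn P X j n)) K
  >= sum1 (fun j => rtjn P X K j n * (1 - pjn P X j n)) K.
Proof.
  apply Rle_ge, sum1_le. intros j Hj. pose proof (pjn_range n j ltac:(lia)).
  apply Rmult_le_compat_r; [lra|]. unfold rjn, rtjn.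
  apply Rplus_le_compat_l, Rmult_le_compat_l; [lra|].
  apply sum_range_le_support; [intros; apply pjn_range; auto | intros; apply pjn_beyond; auto].
Qed.

(** * The theoretical h-index *)

Lemma h_nonneg n h : is_lub (hset P X n) h -> 0 <= h.
Proof.
  intros [Hub _]. apply Hub. split; [lra|]. apply Rle_ge, Rmult_le_pos; [apply pos_INR | apply Sminus_range].
Qed.

Lemma hset_lub_upper n h x : is_lub (hset P X n) h -> h < x -> INR n * Ssurv P X x <= h.
Proof.
  intros Hl Hx. pose proof (h_nonneg n h Hl).
  apply Rnot_lt_le. intros Hlt.
  set (z := Rmin (INR n * Ssurv P X x) x).
  assert (h < z) by (apply Rmin_glb_lt; lra).
  assert (z <= h); [|lra].
  apply (proj1 Hl). split; [lra|]. apply Rle_ge, Rle_trans with (INR n * Ssurv P X x); [apply Rmin_l|].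
  apply Rmult_le_compat_l; [apply pos_INR | apply Ssurv_le_Sminus, Rmin_r].
Qed.

Lemma hset_lub_lower n h y : is_lub (hset P X n) h -> 0 <= y < h -> h <= INR n * Sminus P X y.
Proof.
  intros Hl Hy.
  assert (Hmax : h <= Rmax y (INR n * Sminus P X y)).
  { apply (proj2 Hl). intros x [Hx1 Hx2]. destruct (Rle_dec y x).
    - apply Rle_trans with (INR n * Sminus P X y); [|apply Rmax_r].
      apply Rle_trans with (INR n * Sminus P X x); [lra|].
      apply Rmult_le_compat_l; [apply pos_INR | apply Sminus_antitone; auto].
    - apply Rle_trans with y; [lra | apply Rmax_l]. }
  unfold Rmax in Hmax. destruct (Rle_dec y (INR n * Sminus P X y)); lra.
Qed.

Lemma h_unbounded (h : nat -> R) :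
  (forall x, 0 <= x -> 0 < Ssurv P X x) -> (forall n, (1 <= n)%nat -> is_lub (hset P X n) (h n)) ->
  forall M, exists N, forall n, (N <= n)%nat -> M <= h n.
Proof.
  intros HS Hh M. set (M' := Rmax M 0). assert (HM : 0 <= M') by apply Rmax_r.
  destruct (INR_archimed (Ssurv P X M') M' (HS M' HM)) as [N0 HN0].
  exists (Nat.max N0 1). intros n Hn.
  apply Rle_trans with M'; [apply Rmax_l|].
  apply (proj1 (Hh n ltac:(lia))). split; auto. apply Rle_ge.
  apply Rle_trans with (INR n * Ssurv P X M').
  - apply Rle_trans with (INR N0 * Ssurv P X M'); [lra|].
    apply Rmult_le_compat_r; [pose proof (HS M' HM); lra | apply le_INR; lia].
  - apply Rmult_le_compat_l; [apply pos_INR | apply Ssurv_le_Sminus; lra].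
Qed.

(* Above [2 h], [n S(l - 1) <= h < l / 2], so the upper binomial tail gives [e^(l/2) / 2^l]. *)
Lemma pjn_le_rho_pow n h l : is_lub (hset P X n) h -> 1 <= h ->
  (floorn (2 * h) < l <= n)%nat -> pjn P X l n <= rho ^ l.
Proof.
  intros Hl H1 Hln. destruct (floorn_spec (2 * h)) as [F1 F2]; [lra|].
  assert (HL : INR (S (floorn (2 * h))) <= INR l) by (apply le_INR; lia). rewrite S_INR in HL.
  set (s := Ssurv P X (INR l - 1)). pose proof (Ssurv_range (INR l - 1)) as Hs. fold s in Hs.
  assert (Hm : INR n * s <= h) by (apply (hset_lub_upper n h); auto; lra).
  unfold pjn. rewrite (proj2 (Nat.leb_le l n)) by lia.
  apply Rle_trans with ((1 + s) ^ n / 2 ^ l); [apply binom_upper_tail_le; auto|].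
  unfold rho, Rdiv. rewrite Rpow_mult_distr, <- exp_INR_mul, pow_inv.
  apply Rmult_le_compat_r; [left; apply Rinv_0_lt_compat, pow_lt; lra|].
  apply Rle_trans with (exp s ^ n); [apply pow_incr; split; [lra | apply exp_ineq1_le]|].
  rewrite <- exp_INR_mul. apply exp_le. lra.
Qed.

Lemma VarHtilde_minus_vsum_le n h : (1 <= n)%nat -> is_lub (hset P X n) h -> 1 <= h ->
  VarHtilde P X n - vsum (fun j => pjn P X j n) (floorn (2 * h)) <= tail_bound (floorn (2 * h)).
Proof.
  intros Hn Hl H1. rewrite VarHtilde_eq_vsum by auto.
  set (K := floorn (2 * h)). set (q := fun j => pjn P X j n).
  assert (Hq : forall j, (1 <= j)%nat -> 0 <= q j <= 1) by (intros; apply pjn_range; auto).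
  destruct (le_lt_dec n K).
  - rewrite (vsum_stationary q n K) by (auto; intros; apply pjn_beyond; auto).
    pose proof (tail_bound_nonneg K). lra.
  - (* Each added level [l > K] contributes at most [q l (2 l - 1) <= 3 l rho^l]. *)
    assert (Hd : forall d, (K + d <= n)%nat ->
       vsum q (K + d) - vsum q K <= 3 * sum_lt (fun i => INR (S K + i) * rho ^ (S K + i)) d).
    { induction d as [|d IH]; intros Hd; [rewrite Nat.add_0_r; simpl; lra|].
      rewrite Nat.add_succ_r. specialize (IH ltac:(lia)).
      pose proof (vsum_S_bounds q Hq (K + d)).
      assert (q (S (K + d)) <= rho ^ S (K + d)) by (apply (pjn_le_rho_pow n h); auto; unfold K; lia).
      assert (0 <= q (S (K + d))) by (apply Hq; lia).
      assert (q (S (K + d)) * (1 + 2 * INR (K + d)) <= 3 * (INR (S (K + d)) * rho ^ S (K + d)))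
        by (rewrite S_INR; pose proof (pos_INR (K + d)); nra).
      cbn [sum_lt]. change (S K + d)%nat with (S (K + d)). lra. }
    specialize (Hd (n - K)%nat ltac:(lia)). replace (K + (n - K))%nat with n in Hd by lia.
    pose proof (sum_lt_weighted_geom_le rho (S K) (n - K) rho_range). unfold tail_bound. lra.
Qed.

Lemma VarHtilde_minus_vsum_cv0 (h : nat -> R) :
  (forall x, 0 <= x -> 0 < Ssurv P X x) -> (forall n, (1 <= n)%nat -> is_lub (hset P X n) (h n)) ->
  Un_cv (fun n => VarHtilde P X n - vsum (fun j => pjn P X j n) (floorn (2 * h n))) 0.
Proof.
  intros HS Hh e He. destruct (tail_bound_cv0 e He) as [A HA].
  destruct (h_unbounded h HS Hh (Rmax 1 ((INR A + 1) / 2))) as [N HN].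
  exists (Nat.max N 1). intros n Hn. specialize (HN n ltac:(lia)).
  pose proof (Rmax_l 1 ((INR A + 1) / 2)). pose proof (Rmax_r 1 ((INR A + 1) / 2)).
  destruct (floorn_spec (2 * h n)) as [F1 F2]; [lra|].
  assert (HK : (A <= floorn (2 * h n))%nat) by (apply INR_le; lra).
  pose proof (VarHtilde_minus_vsum_le n (h n) ltac:(lia) (Hh n ltac:(lia)) ltac:(lra)).
  pose proof (vsum_le_VarHtilde n (floorn (2 * h n)) ltac:(lia)).
  specialize (HA _ HK). unfold R_dist. rewrite Rminus_0_r, Rabs_pos_eq; lra.
Qed.

(** * The empirical h-index *)

Lemma Hhatset_iff n w x : (1 <= n)%nat ->
  (Hhatset X n w x <-> 0 <= x /\ x <= INR (nhits (geb x) w n)).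
Proof. intros Hn. unfold Hhatset. rewrite nShatm by auto. split; intros [H1 H2]; split; lra. Qed.

Lemma Hhatset_down n w x y : (1 <= n)%nat -> Hhatset X n w x -> 0 <= y <= x -> Hhatset X n w y.
Proof.
  intros Hn. rewrite !Hhatset_iff by auto. intros [_ Hx] Hy. split; [lra|].
  apply Rle_trans with x; [lra|]. apply Rle_trans with (1 := Hx).
  apply le_INR, nhits_mono. intros t. rewrite !geb_true. lra.
Qed.

Lemma Hhat_nonneg n w H : (1 <= n)%nat -> is_lub (Hhatset X n w) H -> 0 <= H.
Proof. intros Hn Hl. apply (proj1 Hl). apply Hhatset_iff; auto. split; [lra | apply pos_INR]. Qed.

Lemma Hhat_ge_iff n w H z : (1 <= n)%nat -> is_lub (Hhatset X n w) H ->
  (z <= H <-> forall k : nat, z - / (INR k + 1) < 0 \/ Hhatset X n w (z - / (INR k + 1))).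
Proof.
  intros Hn Hl. pose proof (Hhat_nonneg n w H Hn Hl). split.
  - intros Hz k. pose proof (inv_INR_succ_pos k).
    destruct (Rlt_dec (z - / (INR k + 1)) 0) as [|Hx0]; [left; auto | right].
    destruct (is_lub_exists_gt _ _ (z - / (INR k + 1)) Hl) as [x [Hx Hlt]]; [lra|].
    apply (Hhatset_down n w x); auto; lra.
  - intros Hk. apply Rle_of_forall_sub_inv. intros k.
    destruct (Hk k) as [|Hin]; [lra | apply (proj1 Hl); auto].
Qed.

Section EmpiricalIndex.

Variable Hhat : nat -> Omega -> R.
Hypothesis Hhat_lub : forall n w, (1 <= n)%nat -> is_lub (Hhatset X n w) (Hhat n w).

Lemma ev_Hhat_ge n z : (1 <= n)%nat -> ev (fun w => z <= Hhat n w).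
Proof.
  intros Hn.
  replace (fun w => z <= Hhat n w) with (fun w => forall k : nat, z - / (INR k + 1) < 0 \/
      (0 <= z - / (INR k + 1) /\ z - / (INR k + 1) <= INR (nhits (geb (z - / (INR k + 1))) w n))).
  - apply (ev_forall HP). intros k.
    exact (ev_nhits _ (borel_geb _) n
             (fun c => z - / (INR k + 1) < 0 \/ (0 <= z - / (INR k + 1) /\ z - / (INR k + 1) <= INR c))).
  - apply pred_ext; intros w. rewrite (Hhat_ge_iff n w _ z Hn (Hhat_lub n w Hn)).
    split; intros H k; destruct (H k) as [A|A]; auto; right; apply (Hhatset_iff n w _ Hn); auto.
Qed.

Lemma ev_floorn_3Hhat n m : (1 <= n)%nat -> ev (fun w => floorn (3 * Hhat n w) = m).
Proof.
  intros Hn.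
  replace (fun w => floorn (3 * Hhat n w) = m)
    with (fun w => INR m / 3 <= Hhat n w /\ ~ ((INR m + 1) / 3 <= Hhat n w)).
  - apply (ev_and HP); [|apply (ev_not HP)]; apply ev_Hhat_ge; auto.
  - apply pred_ext; intros w. pose proof (Hhat_nonneg n w _ Hn (Hhat_lub n w Hn)).
    rewrite floorn_char by lra. split; intros [A B]; split; lra.
Qed.

Lemma floorn_2h_le_floorn_3Hhat n w h : (1 <= n)%nat -> 0 <= h ->
  (floorn (2 * h / 3) < nhits (geb (2 * h / 3)) w n)%nat -> (floorn (2 * h) <= floorn (3 * Hhat n w))%nat.
Proof.
  intros Hn Hh Hmany. set (y := 2 * h / 3) in *.
  destruct (floorn_spec y) as [_ Fy]; [unfold y; lra|].
  apply le_INR in Hmany. rewrite S_INR in Hmany.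
  assert (y <= Hhat n w) by (apply (proj1 (Hhat_lub n w Hn)), Hhatset_iff; auto; split; unfold y in *; lra).
  apply floorn_mono. unfold y in *. lra.
Qed.

End EmpiricalIndex.

(* By the lower binomial tail, this probability is at most [sig ^ floorn (2 h / 3)]. *)
Lemma P_few_above_cv0 (h : nat -> R) :
  (forall x, 0 <= x -> 0 < Ssurv P X x) -> (forall n, (1 <= n)%nat -> is_lub (hset P X n) (h n)) ->
  Un_cv (fun n => P (fun w => (nhits (geb (2 * h n / 3)) w n <= floorn (2 * h n / 3))%nat)) 0.
Proof.
  intros HS Hh d Hd. destruct sig_range as [S0 S1].
  destruct (pow_lt_1_zero sig ltac:(rewrite Rabs_pos_eq; lra) d Hd) as [Ns HNs].
  destruct (h_unbounded h HS Hh (3 / 2 * (INR Ns + 1))) as [N HN].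
  exists (Nat.max N 1). intros n Hn. specialize (HN n ltac:(lia)).
  set (y := 2 * h n / 3). destruct (floorn_spec y) as [F1 F2]; [unfold y; pose proof (pos_INR Ns); lra|].
  set (a := floorn y) in *.
  assert (Ha : (Ns <= a)%nat) by (apply INR_le; unfold y in *; lra).
  replace (fun w => (nhits (geb y) w n <= a)%nat) with (fun w => Nat.leb (nhits (geb y) w n) a = true)
    by (apply pred_ext; intros w; apply Nat.leb_le).
  unfold R_dist. rewrite Rminus_0_r, Rabs_pos_eq
    by (apply (P_ge0 HP), (ev_nhits _ (borel_geb y) n (fun c => Nat.leb c a = true))).
  rewrite (P_nhits_sat _ (borel_geb y) (fun k => Nat.leb k a) n), Sminus_eq.
  set (s := Sminus P X y). pose proof (Sminus_range y) as Hs. fold s in Hs.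
  assert (Hm : h n <= INR n * s)
    by (apply (hset_lub_lower n (h n) y (Hh n ltac:(lia))); unfold y; pose proof (pos_INR Ns); lra).
  apply Rle_lt_trans with (2 ^ a * (1 - s / 2) ^ n); [apply binom_lower_tail_le; auto|].
  specialize (HNs a Ha). rewrite Rabs_pos_eq in HNs by (apply pow_le; lra).
  apply Rle_lt_trans with (2 := HNs). unfold sig. rewrite Rpow_mult_distr.
  apply Rmult_le_compat_l; [apply pow_le; lra|].
  apply Rle_trans with (exp (- (s / 2)) ^ n).
  - apply pow_incr. split; [lra|]. pose proof (exp_ineq1_le (- (s / 2))). lra.
  - rewrite <- !exp_INR_mul. apply exp_le. unfold y in F1. nra.
Qed.

Lemma Vn_ratio_close n K M eps : (1 <= n)%nat -> 0 < VarHtilde P X n ->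
  VarHtilde P X n - vsum (fun j => pjn P X j n) K <= eps * VarHtilde P X n -> (K <= M)%nat ->
  Rabs (Vn P X M n / VarHtilde P X n - 1) <= eps.
Proof.
  intros Hn HV Hclose HKM. rewrite Vn_eq_vsum.
  set (V := VarHtilde P X n) in *. set (q := fun j => pjn P X j n) in *.
  assert (vsum q K <= vsum q M) by (apply vsum_mono; auto; intros; apply pjn_range; auto).
  assert (vsum q M <= V) by (apply vsum_le_VarHtilde; auto).
  replace (vsum q M / V - 1) with (- ((V - vsum q M) / V)) by (field; lra).
  rewrite Rabs_Ropp, Rabs_pos_eq by (apply Rmult_le_pos; [lra | left; apply Rinv_0_lt_compat; lra]).
  apply Rmult_le_reg_r with V; auto. unfold Rdiv. rewrite Rmult_assoc, Rinv_l by lra. lra.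
Qed.

Lemma P_Vn_far_cv0 (h : nat -> R) (Hhat : nat -> Omega -> R) :
  (forall x, 0 <= x -> 0 < Ssurv P X x) -> (forall n, (1 <= n)%nat -> is_lub (hset P X n) (h n)) ->
  (forall n w, (1 <= n)%nat -> is_lub (Hhatset X n w) (Hhat n w)) ->
  forall c N0, 0 < c -> (forall n, (N0 <= n)%nat -> c <= VarHtilde P X n) ->
  forall eps, 0 < eps ->
  Un_cv (fun n => P (fun w => Rabs (Vn P X (floorn (3 * Hhat n w)) n / VarHtilde P X n - 1) > eps)) 0.
Proof.
  intros HS Hh Hhh c N0 Hc HN0 eps Heps.
  destruct (VarHtilde_minus_vsum_cv0 h HS Hh (eps * c)) as [N1 HN1]; [nra|].
  apply (Un_cv_squeeze_0 _ _ (Nat.max (Nat.max N0 N1) 1) ) with (2 := P_few_above_cv0 h HS Hh).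
  intros n Hn. specialize (HN0 n ltac:(lia)). specialize (HN1 n ltac:(lia)).
  unfold R_dist in HN1. rewrite Rminus_0_r in HN1.
  assert (Hev : ev (fun w => Rabs (Vn P X (floorn (3 * Hhat n w)) n / VarHtilde P X n - 1) > eps)).
  { replace (fun w => Rabs (Vn P X (floorn (3 * Hhat n w)) n / VarHtilde P X n - 1) > eps)
      with (fun w => exists m, floorn (3 * Hhat n w) = m /\ Rabs (Vn P X m n / VarHtilde P X n - 1) > eps)
      by (apply pred_ext; intros w; split; [intros [m [<- E]]; auto | eauto]).
    apply (ev_exists HP). intros m. apply (ev_and_prop HP), ev_floorn_3Hhat; auto; lia. }
  split; [apply (P_ge0 HP); auto|].
  apply (P_mono HP); auto; [exact (ev_nhits _ (borel_geb _) n (fun c => c <= _)%nat)|].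
  intros w Hfar. apply Nat.nlt_ge. intros Hmany.
  pose proof (h_nonneg n (h n) (Hh n ltac:(lia))).
  apply (Rlt_not_le _ _ Hfar), (Vn_ratio_close n (floorn (2 * h n))); try lra.
  - lia.
  - pose proof (Rle_abs (VarHtilde P X n - vsum (fun j => pjn P X j n) (floorn (2 * h n)))). nra.
  - apply (floorn_2h_le_floorn_3Hhat Hhat); auto; lia.
Qed.

End IidSample.

Theorem theorem4p1
  (Omega : Type) (ev : (Omega -> Prop) -> Prop) (P : (Omega -> Prop) -> R)
  (X : nat -> Omega -> R)
  (h : nat -> R) (Hhat : nat -> Omega -> R) :
  prob_space Omega ev P ->
  iid_seq Omega ev P X ->
  (forall i w, 0 < X i w) ->
  (forall x, 0 <= x -> 0 < Ssurv P X x) ->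
  (forall n, (1 <= n)%nat -> is_lub (hset P X n) (h n)) ->
  (forall n w, (1 <= n)%nat -> is_lub (Hhatset X n w) (Hhat n w)) ->
  (* (i) *)
  (forall n, (1 <= n)%nat ->
     VarHtilde P X n
       >= sum1 (fun j => rjn P X j n * (1 - pjn P X j n)) (floorn (2 * h n))
     /\ sum1 (fun j => rjn P X j n * (1 - pjn P X j n)) (floorn (2 * h n))
       >= sum1 (fun j => rtjn P X (floorn (2 * h n)) j n * (1 - pjn P X j n))
               (floorn (2 * h n)))
  /\
  (* (ii) *)
  ((exists c, 0 < c /\ exists N, forall n, (N <= n)%nat -> c <= VarHtilde P X n) ->
     Un_cv (fun n => VarHtilde P X n /
              sum1 (fun j => rtjn P X (floorn (2 * h n)) j n * (1 - pjn P X j n))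
                   (floorn (2 * h n))) 1
     /\
     forall eps, 0 < eps ->
       Un_cv (fun n => P (fun w =>
                Rabs (Vn P X (floorn (3 * Hhat n w)) n / VarHtilde P X n - 1) > eps)) 0).
Proof.
  intros HP HI _ HS Hh Hhh. split.
  - intros n Hn. split; [apply (VarHtilde_ge_sum_rjn X HP HI) | apply (sum_rjn_ge_sum_rtjn X HP HI)]; auto.
  - intros [c [Hc [N HN]]]. split.
    + apply (Un_cv_div_1 _ _ c N Hc HN).
      replace (fun n => VarHtilde P X n -
                 sum1 (fun j => rtjn P X (floorn (2 * h n)) j n * (1 - pjn P X j n)) (floorn (2 * h n)))
        with (fun n => VarHtilde P X n - vsum (fun j => pjn P X j n) (floorn (2 * h n)))
        by (extensionality n; rewrite sum_rtjn_eq_vsum; reflexivity).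
      exact (VarHtilde_minus_vsum_cv0 X HP HI h HS Hh).
    + exact (P_Vn_far_cv0 X HP HI h Hhat HS Hh Hhh c N Hc HN).
Qed.
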